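(* Let $H$ be a real Hilbert space and let $\mathcal{S}\subset H$ be a dense subspace. Equip $H\otimes \mathcal{C}l_n$ with the $\mathcal{C}l_n$-valued inner product $\langle\cdot,\cdot\rangle$ induced by the inner product of $H$. Let $D:\mathcal{S}\otimes\mathcal{C}l_n\to\mathcal{S}\otimes\mathcal{C}l_n$ be a linear map which has a dual operator $D^*$ on $\mathcal{S}\otimes\mathcal{C}l_n$, i.e. $\langle Df,g\rangle=\langle f,D^*g\rangle$ for all $f,g\in\mathcal{S}\otimes\mathcal{C}l_n$, and suppose $D^*D=DD^*$. Let $G$ be an operator on $\mathcal{S}\otimes\mathcal{C}l_n$ that is an inverse of $D$, i.e. $DG=GD=I$. Define $\Pi=D^*G$. Then $\Pi$ is an isometric operator in $H\otimes\mathcal{C}l_n$: $\langle \Pi f,\Pi g\rangle=\langle f,g\rangle$ for all $f,g\in \mathcal{S}\otimes\mathcal{C}l_n$.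
   Context: $\mathcal{C}l_n$ is the real Clifford algebra generated by an orthonormal basis $e_1,\dots,e_n$ of $\mathbb{R}^n$ with relations $e_ie_j+e_je_i=-2\delta_{ij}e_0$, $e_0$ the identity. For $a=\sum_A a_Ae_A\in\mathcal{C}l_n$, the conjugation $\bar a$ is the anti-involution with $\overline{e_{j_1}\cdots e_{j_r}}=(-1)^r e_{j_r}\cdots e_{j_1}$ composed with reversion, i.e. $\bar a=\tilde a^{\dagger}$ where $\tilde{}$ is reversion and $a^\dagger$ is Clifford conjugation. The $\mathcal{C}l_n$-valued inner product on $H\otimes\mathcal{C}l_n$ is $\langle \sum_A u_Ae_A,\sum_B v_Be_B\rangle=\sum_{A,B}\langle u_A,v_B\rangle_H\,\overline{e_A}e_B$ (for $H=L^2$ of a measure space this is $\int\overline{u}v$). *)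

From HB Require Import structures.
From mathcomp Require Import all_boot all_order all_algebra.
From mathcomp Require Import all_classical all_reals all_analysis.
Set Implicit Arguments. Unset Strict Implicit. Unset Printing Implicit Defensive.
Import Order.TTheory GRing.Theory Num.Theory.
Import numFieldNormedType.Exports.
Local Open Scope classical_set_scope.
Local Open Scope ring_scope.

(* ---------- The real Clifford algebra Cl_n ----------
   An element is a real function on the index sets A ⊆ {0,..,n-1}
   (coefficient of the basis blade e_A = e_{a1}...e_{ak}, a1<...<ak). *)
Definition cl (R : realType) (n : nat) := {ffun {set 'I_n} -> R}.

Definition cl_e (R : realType) (n : nat) (A : {set 'I_n}) : cl R n :=
  [ffun C => (C == A)%:R].

(* e_A e_B = (-1)^(#{(a,b) in A x B | b < a} + |A ∩ B|) e_{A Δ B},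
   using e_i e_j = - e_j e_i (i <> j) and e_i^2 = -1. *)
Definition blade_sign (R : realType) (n : nat) (A B : {set 'I_n}) : R :=
  (-1) ^+ (#|[set p : 'I_n * 'I_n | (p.1 \in A) && (p.2 \in B) && (p.2 < p.1)%N]|
           + #|A :&: B|).

Definition cl_mul (R : realType) (n : nat) (x y : cl R n) : cl R n :=
  \sum_(A : {set 'I_n}) \sum_(B : {set 'I_n})
     (x A * y B * blade_sign R A B) *: cl_e R ((A :\: B) :|: (B :\: A)).

(* conjugation: bar(e_{j1}...e_{jr}) = (-1)^r e_{jr}...e_{j1}
   = (-1)^r (-1)^(r(r-1)/2) e_A, extended linearly *)
Definition cl_conj (R : realType) (n : nat) (x : cl R n) : cl R n :=
  [ffun A : {set 'I_n} => (-1) ^+ (#|A| + 'C(#|A|, 2)) * x A].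

Definition is_inner_product (R : realType) (H : normedModType R)
    (ip : H -> H -> R) : Prop :=
  [/\ (forall x y, ip x y = ip y x),
      (forall (a : R) (x y z : H), ip (a *: x + y) z = a * ip x z + ip y z)
    & (forall x, `|x| ^+ 2 = ip x x)].

Definition is_subspace (R : realType) (H : normedModType R) (S : set H) : Prop :=
  S 0 /\ forall (a : R) x y, S x -> S y -> S (a *: x + y).

(* ---------- H ⊗ Cl_n ----------
   An element of H ⊗ Cl_n is f = sum_A f_A e_A, represented by A |-> f_A. *)
Definition HCl (H : Type) (n : nat) := {set 'I_n} -> H.

Definition inSCl (H : Type) (n : nat) (S : set H) (f : HCl H n) : Prop :=
  forall A, S (f A).

Definition cl_inner (R : realType) (H : normedModType R) (ip : H -> H -> R)
    (n : nat) (f g : HCl H n) : cl R n :=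
  \sum_(A : {set 'I_n}) \sum_(B : {set 'I_n})
     ip (f A) (g B) *: cl_mul (cl_conj (cl_e R A)) (cl_e R B).

From HB Require Import structures.
From mathcomp Require Import all_boot all_order all_algebra.
From mathcomp Require Import all_classical all_reals all_analysis.
From mathcomp Require Import zify.
Import Order.TTheory GRing.Theory Num.Theory.
Import numFieldNormedType.Exports.
Set Implicit Arguments. Unset Strict Implicit.

(* Conjugation is an anti-involution of Cl_n, so the Cl_n-valued inner product
   is Hermitian, conj <f, g> = <g, f>, and D, D^* are therefore adjoint to each
   other on both sides.  With u = G f and v = G g, normality of D gives
   <D^* u, D^* v> = <D D^* u, v> = <D^* D u, v> = <D^* f, v> = <f, D v> = <f, g>. *)

Lemma bin2D m k : 'C(m + k, 2) = ('C(m, 2) + 'C(k, 2) + m * k)%N.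
Proof.
elim: k => [|k IHk]; first by rewrite addn0 bin0n muln0 !addn0.
by rewrite addnS !binS IHk !bin1; lia.
Qed.

Section Inversions.
Variable n : nat.
Implicit Types A B : {set 'I_n}.

Definition inversions A B : nat :=
  #|[set p : 'I_n * 'I_n | (p.1 \in A) && (p.2 \in B) && (p.2 < p.1)%N]|.

Lemma card_pairs (P : 'I_n -> 'I_n -> bool) :
  #|[set p : 'I_n * 'I_n | P p.1 p.2]| = (\sum_i \sum_j P i j)%N.
Proof.
rewrite -sum1_card big_mkcond /= pair_bigA /=.
by apply: eq_bigr => -[i j] _; rewrite inE; case: (P i j).
Qed.

Lemma inversionsC A B :
  (inversions A B + inversions B A + #|A :&: B| = #|A| * #|B|)%N.
Proof.
have diag : #|A :&: B| =
    (\sum_i \sum_j [&& i \in A, j \in B & val i == val j])%N.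
  rewrite -sum1_card big_mkcond /=; apply: eq_bigr => i _.
  rewrite (bigD1 i) //= big1 => [|j /negPf neq_ji]; last first.
    by rewrite val_eqE eq_sym neq_ji !andbF.
  by rewrite inE eqxx andbT addn0; case: (_ && _).
rewrite /inversions (card_pairs (fun i j => (i \in A) && (j \in B) && (j < i)%N)).
rewrite (card_pairs (fun i j => (i \in B) && (j \in A) && (j < i)%N)).
rewrite [X in (_ + X + _)%N]exchange_big /= diag -cardsX.
rewrite (card_pairs (fun i j => (i \in A) && (j \in B))) -!big_split /=.
apply: eq_bigr => i _; rewrite -!big_split /=; apply: eq_bigr => j _.
by case: (i \in A); case: (j \in B); case: ltngtP.
Qed.

End Inversions.

(* For a = #|A :\: B|, b = #|B :\: A|, c = #|A :&: B| and the inversion counts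
   p, q of inversionsC, this is the parity identity behind blade_sign_conj. *)
Lemma blade_parity a b c p q : (p + q + c = (a + c) * (b + c))%N ->
  odd (a + b + 'C(a + b, 2) + (p + c)) =
  odd (a + c + 'C(a + c, 2) + (b + c + 'C(b + c, 2)) + (q + c)).
Proof.
move=> /(congr1 odd); rewrite !bin2D !oddD !oddM !oddD.
by case: (odd p); case: (odd q); case: (odd c); case: (odd a); case: (odd b);
   case: (odd 'C(a, 2)); case: (odd 'C(b, 2)); case: (odd 'C(c, 2)).
Qed.

Local Open Scope ring_scope.

Section CliffordConjugation.
Variables (R : realType) (n : nat).
Implicit Types A B : {set 'I_n}.

Definition conj_sign A : R := (-1) ^+ (#|A| + 'C(#|A|, 2)).

Lemma conj_sign_sqr A : conj_sign A * conj_sign A = 1.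
Proof. by rewrite -exprD addnn -signr_odd odd_double. Qed.

Lemma blade_signE A B :
  blade_sign R A B = (-1) ^+ (inversions A B + #|A :&: B|).
Proof.
congr (_ ^+ (_ + _)%N); apply: eq_card => p.
by rewrite inE /in_mem /= /in_set asboolb.
Qed.

(* The sign identity expressing conj (e_A e_B) = conj e_B conj e_A. *)
Lemma blade_sign_conj A B :
  conj_sign ((A :\: B) :|: (B :\: A)) * blade_sign R A B =
  conj_sign A * conj_sign B * blade_sign R B A.
Proof.
have cardA : #|A| = (#|A :\: B| + #|A :&: B|)%N by rewrite -(cardsID B A) addnC.
have cardB : #|B| = (#|B :\: A| + #|A :&: B|)%N.
  by rewrite -(cardsID A B) finset.setIC addnC.
have cardD : #|(A :\: B) :|: (B :\: A)| = (#|A :\: B| + #|B :\: A|)%N.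
  rewrite cardsU; suff -> : (A :\: B) :&: (B :\: A) = finset.set0.
    by rewrite cards0 subn0.
  by apply/setP => i; rewrite !inE; case: (i \in A); case: (i \in B).
have := inversionsC A B; rewrite cardA cardB => /blade_parity parity.
rewrite /conj_sign !blade_signE -!exprD (finset.setIC B A) cardA cardB cardD.
by rewrite -signr_odd parity signr_odd.
Qed.

Lemma cl_conj_is_linear : linear (@cl_conj R n).
Proof. by move=> a x y; apply/ffunP => A; rewrite !ffunE mulrDr mulrCA. Qed.

HB.instance Definition _ :=
  GRing.isLinear.Build R (cl R n) (cl R n) _ (@cl_conj R n) cl_conj_is_linear.

Lemma cl_conj_e A : cl_conj (cl_e R A) = conj_sign A *: cl_e R A.
Proof.
apply/ffunP => C; rewrite !ffunE.
by case: eqP => [->|_]; rewrite ?mulr0 ?scaler0 // mulr1 scaler1.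
Qed.

Lemma cl_mul_scale_e a A B :
  cl_mul (a *: cl_e R A) (cl_e R B) =
  (a * blade_sign R A B) *: cl_e R ((A :\: B) :|: (B :\: A)).
Proof.
rewrite /cl_mul (bigD1 A) //= [X in _ + X]big1 => [|A' /negPf neqA]; last first.
  by rewrite big1 // => B' _; rewrite !ffunE neqA mulr0n scaler0 !mul0r scale0r.
rewrite addr0 (bigD1 B) //= [X in _ + X]big1 ?addr0 => [|B' /negPf neqB]; last first.
  by rewrite !ffunE neqB mulr0n mulr0 mul0r scale0r.
by rewrite !ffunE !eqxx !mulr1n -[a *: 1]/(a * 1) !mulr1.
Qed.

Lemma cl_conj_conj_mul_e A B :
  cl_conj (cl_mul (cl_conj (cl_e R A)) (cl_e R B)) =
  cl_mul (cl_conj (cl_e R B)) (cl_e R A).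
Proof.
rewrite !cl_conj_e !cl_mul_scale_e linearZ /= cl_conj_e scalerA.
rewrite (finset.setUC (B :\: A)).
rewrite -mulrA [blade_sign _ _ _ * _]mulrC blade_sign_conj.
by rewrite !mulrA conj_sign_sqr mul1r.
Qed.

End CliffordConjugation.

Section HermitianInnerProduct.
Variables (R : realType) (H : normedModType R) (ip : H -> H -> R) (n : nat).
Hypothesis ipC : forall x y, ip x y = ip y x.

Lemma cl_conj_inner (f g : HCl H n) :
  cl_conj (cl_inner ip f g) = cl_inner ip g f.
Proof.
rewrite /cl_inner linear_sum exchange_big /=; apply: eq_bigr => A _.
rewrite linear_sum; apply: eq_bigr => B _.
by rewrite linearZ /= cl_conj_conj_mul_e ipC.
Qed.

Lemma cl_inner_adjointC (P : set (HCl H n)) (D Dstar : HCl H n -> HCl H n) :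
  (forall f g, P f -> P g -> cl_inner ip (D f) g = cl_inner ip f (Dstar g)) ->
  forall f g, P f -> P g -> cl_inner ip (Dstar f) g = cl_inner ip f (D g).
Proof.
move=> adjD f g Pf Pg.
by rewrite -cl_conj_inner -adjD // cl_conj_inner.
Qed.

End HermitianInnerProduct.

Local Open Scope classical_set_scope.

Theorem mainTheorem1 (R : realType) (H : completeNormedModType R)
    (ip : H -> H -> R) (n : nat) (S : set H)
    (D Dstar G : HCl H n -> HCl H n) :
  is_inner_product ip ->
  is_subspace S ->
  dense S ->
  (* D is a (real-)linear map S ⊗ Cl_n -> S ⊗ Cl_n *)
  (forall f, inSCl S f -> inSCl S (D f)) ->
  (forall (a : R) f g, inSCl S f -> inSCl S g ->
     D (fun A => a *: f A + g A) = (fun A => a *: D f A + D g A)) ->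
  (* D* is a dual operator on S ⊗ Cl_n *)
  (forall f, inSCl S f -> inSCl S (Dstar f)) ->
  (forall f g, inSCl S f -> inSCl S g ->
     cl_inner ip (D f) g = cl_inner ip f (Dstar g)) ->
  (* D* D = D D* *)
  (forall f, inSCl S f -> Dstar (D f) = D (Dstar f)) ->
  (* G is an operator on S ⊗ Cl_n inverse to D *)
  (forall f, inSCl S f -> inSCl S (G f)) ->
  (forall f, inSCl S f -> D (G f) = f) ->
  (forall f, inSCl S f -> G (D f) = f) ->
  (* Pi = D* G is isometric *)
  forall f g, inSCl S f -> inSCl S g ->
    cl_inner ip (Dstar (G f)) (Dstar (G g)) = cl_inner ip f g.
Proof.
move=> [ipC _ _] _ _ _ _ SDstar adjD normalD SG DG _ f g Sf Sg.
have adjDstar := cl_inner_adjointC ipC adjD.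
have [SGf SGg] := (SG f Sf, SG g Sg).
rewrite -(adjD _ _ (SDstar _ SGf) SGg) -(normalD _ SGf) DG //.
by rewrite (adjDstar _ _ Sf SGg) DG.
Qed.
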